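(* Consider the two-bidder simultaneous sealed-bid auction of $n\ge2$ objects described in the context. Suppose ${\mathcal B}$'s random bid vector $(b_1,\dots,b_n)$ satisfies $\sum_i b_i=1$ and each $b_i$ has cumulative distribution function $F_2$, where $F_2(x)=\frac{n}{2}x$ for $x\in[0,\frac{2}{n}]$ and $F_2(x)=1$ for $x\in(\frac2n,1]$. Then the maximum, over all (possibly randomized, independent of ${\mathcal B}$'s bids) bid vectors $(a_1,\dots,a_n)$ of ${\mathcal A}$ with positive entries and $\sum a_i\le 1$, of the expected number of objects won by ${\mathcal A}$ equals exactly $n/2$.
   Context: Auction model: $n$ objects are auctioned simultaneously to two bidders ${\mathcal B}$ and ${\mathcal A}$; each has budget $1$ and submits a vector of bids (one per object) with sum at most $1$. Each object is won by the higher bidder on it; in case of a tie each wins with probability $1/2$. ${\mathcal A}$ knows ${\mathcal B}$'s bidding algorithm (the distribution of his bids) but not the realized bids. *)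

From HB Require Import structures.
From mathcomp Require Import all_boot all_order all_algebra.
From mathcomp Require Import all_classical all_reals all_analysis.
Set Implicit Arguments. Unset Strict Implicit. Unset Printing Implicit Defensive.
Import Order.TTheory GRing.Theory Num.Theory.
Local Open Scope ring_scope.

Definition F2 (R : realType) (n : nat) (x : R) : R :=
  if x <= 2 / n%:R then n%:R / 2 * x else 1.

(* Number of "objects" won by A on one object when A bids x and B bids y:
   1 if A bids higher, 1/2 on a tie (win with probability 1/2), 0 otherwise. *)
Definition win (R : realType) (x y : R) : R :=
  if y < x then 1 else if x == y then 1 / 2 else 0.

(* Expected number of objects won by A, where B's bids b live on (Ω,P), A's
   (randomized) bids a live on (Ω',Q), and independence is modelled by the
   product probability P \x Q. *)
Definition expected_wins (R : realType) (n : nat)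
  (d : measure_display) (Om : measurableType d) (P : probability Om R)
  (d' : measure_display) (Om' : measurableType d') (Q : probability Om' R)
  (b : 'I_n -> Om -> R) (a : 'I_n -> Om' -> R) : \bar R :=
  (\int[(P \x Q)%E]_w (\sum_(i < n) win (a i w.2) (b i w.1))%:E)%E.

From HB Require Import structures.
From mathcomp Require Import all_boot all_order all_algebra.
From mathcomp Require Import all_classical all_reals all_analysis.
From mathcomp Require Import measurable_realfun ring lra.
Import Order.TTheory GRing.Theory Num.Theory.
Local Open Scope ring_scope.
Local Open Scope classical_set_scope.

(* Against a pure bid a_i, A wins object i with expectation at most
   P(b_i <= a_i) = F_2(a_i) <= (n/2) a_i, so a pure bid vector with
   sum a_i <= 1 wins at most n/2 objects, and by Tonelli a randomized bid is an
   average of pure ones.  The uniform bid a_i = 1/n sits where F_2 is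
   continuous, so ties have probability 0 and each object is won with
   probability F_2(1/n) = 1/2. *)

Section win.
Variable R : realType.

Lemma win_ge0 (x y : R) : 0 <= win x y.
Proof. by rewrite /win; case: ifP => // _; case: ifP. Qed.

Lemma win_le_indic (c y : R) : win c y <= \1_[set z | z <= c] y.
Proof.
rewrite /win indicE; have [yc|cy] := ltrP y c.
  by rewrite mem_set //= ltW.
case: eqVneq => [<-|_]; last by case: (_ \in _).
by rewrite mem_set //= ler_pdivrMr // mul1r ler1n.
Qed.

Lemma indic_le_win (c' c y : R) : c' < c -> \1_[set z | z <= c'] y <= win c y.
Proof.
move=> c'c; rewrite indicE.
have [yc'|_] := boolP (y \in _); last exact: win_ge0.
by move: yc'; rewrite inE /= /win => /le_lt_trans ->.
Qed.

Lemma measurable_fun_win d (T : measurableType d) (f g : T -> R) :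
  measurable_fun setT f -> measurable_fun setT g ->
  measurable_fun setT (fun w => win (f w) (g w)).
Proof.
move=> mf mg; apply: measurable_fun_ifT; first exact: measurable_fun_ltr.
  exact: measurable_cst.
by apply: measurable_fun_ifT => //; exact: measurable_fun_eqr.
Qed.

End win.

Section single_object.
Context {R : realType} {d : measure_display} {Om : measurableType d}.
Variables (P : probability Om R) (X : {RV P >-> R}).

Lemma measurable_RV_le (c : R) : measurable [set w | X w <= c].
Proof.
have := measurable_funPT X measurableT _ (measurable_itv `]-oo, c]%R).
by rewrite setTI.
Qed.

Lemma integral_win_le_cdf (c : R) :
  (\int[P]_w (win c (X w))%:E <= P [set w | (X w <= c)%R])%E.
Proof.
have mXc := measurable_RV_le c.
rewrite -[A in (_ <= P A)%E]setIT -integral_indic //.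
apply: ge0_le_integral => //.
- by move=> w _; rewrite lee_fin win_ge0.
- by apply/measurable_EFinP; apply: measurable_fun_win.
- exact/measurable_EFinP/measurable_indic.
- by move=> w _; rewrite lee_fin win_le_indic.
Qed.

Lemma cdf_le_integral_win (c' c : R) : c' < c ->
  (P [set w | (X w <= c')%R] <= \int[P]_w (win c (X w))%:E)%E.
Proof.
move=> c'c; have mXc' := measurable_RV_le c'.
rewrite -[A in (P A <= _)%E]setIT -integral_indic //.
apply: ge0_le_integral => //.
- exact/measurable_EFinP/measurable_indic.
- by apply/measurable_EFinP; apply: measurable_fun_win.
- by move=> w _; rewrite lee_fin indic_le_win.
Qed.

Lemma integral_win_left_continuous_cdf (c v : R) :
  P [set w | (X w <= c)%R] = v%:E ->
  (forall e, 0 < e -> exists2 c', c' < c &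
    ((v - e)%:E <= P [set w | (X w <= c')%R])%E) ->
  (\int[P]_w (win c (X w))%:E = v%:E)%E.
Proof.
move=> Fc Fleft; apply/eqP; rewrite eq_le -Fc integral_win_le_cdf /=.
apply/lee_addgt0Pr => e e0; have [c' c'c Fc'] := Fleft e e0.
rewrite Fc -leeBlDr // -EFinB (le_trans Fc') //.
exact: cdf_le_integral_win.
Qed.

End single_object.

Section pure_strategies.
Context {R : realType} {d : measure_display} {Om : measurableType d}.
Context (P : probability Om R) {n : nat} (b : 'I_n -> {RV P >-> R}).

Definition pure_expected_wins (a : 'I_n -> R) : \bar R :=
  (\sum_(i < n) \int[P]_w (win (a i) (b i w))%:E)%E.

Context {d' : measure_display} {Om' : measurableType d'}.
Variables (Q : probability Om' R) (a : 'I_n -> {RV Q >-> R}).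

Let wins (w : Om * Om') : \bar R := (\sum_(i < n) win (a i w.2) (b i w.1))%:E.

Let measurable_wins : measurable_fun setT wins.
Proof.
rewrite /wins; under eq_fun do rewrite -sumEFin.
apply: emeasurable_sum => i; apply/measurable_EFinP; apply: measurable_fun_win.
- exact: measurableT_comp (measurable_funPT (a i)) measurable_snd.
- exact: measurableT_comp (measurable_funPT (b i)) measurable_fst.
Qed.

Let wins_ge0 w : (0 <= wins w)%E.
Proof. by rewrite lee_fin; apply: sumr_ge0 => i _; exact: win_ge0. Qed.

Let fubini_G_wins :
  fubini_G P wins = fun y => pure_expected_wins (fun i => a i y).
Proof.
apply/funext => y; rewrite /fubini_G /wins /=.
under eq_integral do rewrite -sumEFin.
rewrite ge0_integral_sum //.
- by move=> i; apply/measurable_EFinP; apply: measurable_fun_win.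
- by move=> i x _; rewrite lee_fin win_ge0.
Qed.

Lemma expected_wins_tonelli : expected_wins P Q (fun i => b i) (fun i => a i) =
  (\int[Q]_y pure_expected_wins (fun i => a i y))%E.
Proof. by rewrite /expected_wins (fubini_tonelli2 wins) // fubini_G_wins. Qed.

Lemma measurable_pure_expected_wins :
  measurable_fun setT (fun y => pure_expected_wins (fun i => a i y)).
Proof. by rewrite -fubini_G_wins; exact: measurable_fun_fubini_tonelli_G. Qed.

Lemma expected_wins_le_pure (c : R) :
  (forall y, pure_expected_wins (fun i => a i y) <= c%:E)%E ->
  (expected_wins P Q (fun i => b i) (fun i => a i) <= c%:E)%E.
Proof.
move=> le_c; rewrite expected_wins_tonelli.
apply: (@le_trans _ _ (\int[Q]_y c%:E)%E).
  apply: ge0_le_integral => //; last exact: measurable_pure_expected_wins.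
  move=> y _; apply: sume_ge0 => i _; apply: integral_ge0 => w _.
  by rewrite lee_fin win_ge0.
by rewrite integral_cst // [X in (_ * X)%E]probability_setT mule1.
Qed.

Lemma expected_wins_eq_pure (c : R) :
  (forall y, pure_expected_wins (fun i => a i y) = c%:E) ->
  expected_wins P Q (fun i => b i) (fun i => a i) = c%:E.
Proof.
move=> eq_c; rewrite expected_wins_tonelli (eq_integral (fun=> c%:E)) //.
by rewrite integral_cst // [X in (_ * X)%E]probability_setT mule1.
Qed.

End pure_strategies.

Lemma F2_le_linear (R : realType) (n : nat) (x : R) : (0 < n)%N -> 0 <= x ->
  F2 n x <= n%:R / 2 * x.
Proof.
move=> n_gt0 x0; rewrite /F2; case: ifPn => //; rewrite -ltNge => x_gt.
have N0 : (0 : R) < n%:R by rewrite ltr0n.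
have : 2 < x * n%:R by rewrite -ltr_pdivrMr.
nra.
Qed.

Section bidder_B.
Context {R : realType} {d : measure_display} {Om : measurableType d}.
Variables (P : probability Om R) (n : nat) (b : 'I_n -> {RV P >-> R}).
Hypothesis n_gt0 : (0 < n)%N.
Hypothesis b_cdf : forall (i : 'I_n) (x : R), 0 <= x <= 1 ->
  P [set w | b i w <= x] = (F2 n x)%:E.

Local Notation N := (n%:R : R).

Lemma pure_expected_wins_le (a : 'I_n -> R) :
  (forall i, 0 <= a i) -> \sum_(i < n) a i <= 1 ->
  (pure_expected_wins P b a <= (N / 2)%:E)%E.
Proof.
move=> a_ge0 a_sum; apply: (@le_trans _ _ (\sum_(i < n) (N / 2 * a i)%:E)%E).
  apply: lee_sum => i _; apply: le_trans (integral_win_le_cdf _ _ _) _.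
  have a_le1 : a i <= 1.
    apply: le_trans a_sum; rewrite (bigD1 i) //= lerDl.
    by apply: sumr_ge0 => j _.
  by rewrite b_cdf ?a_ge0 // lee_fin F2_le_linear.
by rewrite sumEFin lee_fin -mulr_sumr; apply: ler_piMr.
Qed.

Lemma pure_expected_wins_uniform :
  pure_expected_wins P b (fun=> N^-1) = (N / 2)%:E.
Proof.
have N_gt0 : 0 < N by rewrite ltr0n.
have NV : N * N^-1 = 1 by rewrite mulfV // gt_eqF.
have NV_gt0 : 0 < N^-1 by rewrite invr_gt0.
have NV_le1 : N^-1 <= 1 by rewrite invf_le1 // ler1n.
have half i : (\int[P]_w (win N^-1 (b i w))%:E = (1 / 2)%:E)%E.
  apply: integral_win_left_continuous_cdf.
    have c01 : 0 <= N^-1 <= 1 by apply/andP; split; lra.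
    by rewrite b_cdf // /F2 ifT; [rewrite mulrAC NV | lra].
  (* F_2 is linear just below 1/n: F_2((1 - m)/n) = (1 - m)/2 >= 1/2 - e. *)
  move=> e e0; set m := Num.min 1 (2 * e).
  have m_le1 : m <= 1 by rewrite ge_min lexx.
  have m_le2e : m <= 2 * e by rewrite ge_min lexx orbT.
  have mNV_gt0 : 0 < m * N^-1 by rewrite mulr_gt0 // lt_min ltr01 mulr_gt0.
  exists ((1 - m) * N^-1); first by lra.
  have c'_ge0 : 0 <= (1 - m) * N^-1 by rewrite mulr_ge0 ?subr_ge0 // ltW.
  have c01 : 0 <= (1 - m) * N^-1 <= 1 by apply/andP; split; lra.
  rewrite b_cdf // /F2 ifT; last by lra.
  have -> : N / 2 * ((1 - m) * N^-1) = (1 - m) / 2 by field; rewrite gt_eqF.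
  rewrite lee_fin; lra.
rewrite /pure_expected_wins; under eq_bigr do rewrite half.
by rewrite sumEFin sumr_const card_ord -mulr_natr; congr (_%:E); lra.
Qed.

End bidder_B.

Theorem lemma2p2 (R : realType) (n : nat) (hn : (2 <= n)%N)
  (d : measure_display) (Om : measurableType d) (P : probability Om R)
  (b : 'I_n -> {RV P >-> R})
  (hbsum : forall w, \sum_(i < n) b i w = 1)
  (hbcdf : forall (i : 'I_n) (x : R), 0 <= x <= 1 ->
      P [set w | b i w <= x] = (F2 n x)%:E) :
  (forall (d' : measure_display) (Om' : measurableType d')
          (Q : probability Om' R) (a : 'I_n -> {RV Q >-> R}),
      (forall i w, 0 < a i w) -> (forall w, \sum_(i < n) a i w <= 1) ->
      (expected_wins P Q (fun i => b i) (fun i => a i) <= (n%:R / 2)%:E)%E)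
  /\
  (exists (d' : measure_display) (Om' : measurableType d')
          (Q : probability Om' R) (a : 'I_n -> {RV Q >-> R}),
      (forall i w, 0 < a i w) /\ (forall w, \sum_(i < n) a i w <= 1) /\
      expected_wins P Q (fun i => b i) (fun i => a i) = (n%:R / 2)%:E).
Proof.
have n_gt0 : (0 < n)%N by apply: leq_trans hn.
split.
  move=> d' Om' Q a a_gt0 a_sum; apply: expected_wins_le_pure => y.
  by apply: pure_expected_wins_le => // i; exact/ltW.
exists d, Om, P, (fun=> cst n%:R^-1 : {RV P >-> R}); split; [|split].
- by move=> i w; rewrite /= invr_gt0 ltr0n.
- move=> w; rewrite (eq_bigr (fun=> n%:R^-1)) // sumr_const card_ord.
  by rewrite -[_ *+ n]mulr_natr mulVf // pnatr_eq0 -lt0n.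
- by apply: expected_wins_eq_pure => y; exact: pure_expected_wins_uniform.
Qed.
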